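(* Let $L\in\mathcal{N}$ and assume that $L$ is a sublattice of a free lattice. Let $K$ be a convex sublattice of $L$, and let $a\in L$ satisfy $a\parallel b$ for all $b\in K$. Then $|\{a\vee b: b\in K\}|\ge 3$, or $|\{a\wedge b: b\in K\}|\ge 3$, or $K$ is a distributive lattice.
   Context: $\mathcal{N}$ denotes the variety of lattices generated by the pentagon $N_5$. A convex sublattice of $L$ is a sublattice $K$ of $L$ such that whenever $x,z\in K$, $y\in L$ and $x\le y\le z$, then $y\in K$. For elements $x,y$, $x\parallel y$ means neither $x\le y$ nor $y\le x$. *)

From HB Require Import structures.
From mathcomp Require Import all_boot all_order.
Set Implicit Arguments. Unset Strict Implicit. Unset Printing Implicit Defensive.
Import Order.TTheory.
Local Open Scope order_scope.

Inductive lterm (V : Type) : Type :=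
  | LVar of V
  | LJoin of lterm V & lterm V
  | LMeet of lterm V & lterm V.
Arguments LVar {V}.
Arguments LJoin {V}.
Arguments LMeet {V}.

Fixpoint leval (V A : Type) (j m : A -> A -> A) (v : V -> A) (t : lterm V) : A :=
  match t with
  | LVar x => v x
  | LJoin s u => j (leval j m v s) (leval j m v u)
  | LMeet s u => m (leval j m v s) (leval j m v u)
  end.

Definition lat_eval (V : Type) d (M : latticeType d) (v : V -> M) (t : lterm V) : M :=
  leval (@Order.join d M) (@Order.meet d M) v t.

Inductive N5 : Type := N5bot | N5a | N5b | N5c | N5top.

Definition N5le (x y : N5) : bool :=
  match x, y with
  | N5bot, _ => true
  | _, N5top => true
  | N5a, N5a | N5b, N5b | N5c, N5c => true
  | N5a, N5c => true
  | _, _ => false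
  end.

Definition N5join (x y : N5) : N5 :=
  if N5le x y then y else if N5le y x then x else N5top.
Definition N5meet (x y : N5) : N5 :=
  if N5le x y then x else if N5le y x then y else N5bot.

Definition N5_satisfies (s t : lterm nat) : Prop :=
  forall v : nat -> N5, leval N5join N5meet v s = leval N5join N5meet v t.

(* L belongs to the variety generated by N5: L satisfies every lattice
   identity satisfied by N5 (Birkhoff: HSP(N5) = Mod(Id(N5))). *)
Definition in_var_N5 d (L : latticeType d) : Prop :=
  forall s t : lterm nat, N5_satisfies s t ->
    forall v : nat -> L, lat_eval v s = lat_eval v t.

(* Order of the free lattice FL(X) on terms over X: s <= t in FL(X) iff
   the inequality holds in every lattice under every valuation. *)
Definition FL_le (X : Type) (s t : lterm X) : Prop :=
  forall d (M : latticeType d) (v : X -> M), lat_eval v s <= lat_eval v t.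
Definition FL_eq (X : Type) (s t : lterm X) : Prop := FL_le s t /\ FL_le t s.

(* L is (isomorphic to) a sublattice of a free lattice FL(X): there is an
   injective lattice homomorphism from L to FL(X) (elements of FL(X) being
   terms modulo FL_eq). *)
Definition sublattice_of_free d (L : latticeType d) : Prop :=
  exists (X : Type) (f : L -> lterm X),
    [/\ forall x y, FL_eq (f (x `|` y)) (LJoin (f x) (f y)),
        forall x y, FL_eq (f (x `&` y)) (LMeet (f x) (f y)) &
        forall x y, FL_eq (f x) (f y) -> x = y].

Definition convex_sublattice d (L : latticeType d) (K : L -> Prop) : Prop :=
  [/\ forall x y, K x -> K y -> K (x `|` y),
      forall x y, K x -> K y -> K (x `&` y) &
      forall x y z, K x -> K z -> x <= y -> y <= z -> K y].

Definition distributive_sub d (L : latticeType d) (K : L -> Prop) : Prop :=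
  forall x y z, K x -> K y -> K z -> x `&` (y `|` z) = (x `&` y) `|` (x `&` z).

Definition incomp d (L : latticeType d) (x y : L) : Prop := ~ (x <= y) /\ ~ (y <= x).

From HB Require Import structures.
From mathcomp Require Import all_boot all_order.
From Stdlib Require Import Classical.
Set Implicit Arguments. Unset Strict Implicit. Unset Printing Implicit Defensive.
Import Order.TTheory.
Local Open Scope order_scope.

(* Free lattices satisfy Whitman's condition (W), hence so does L; (W) in a
   free lattice is proved by doubling an interval in a product of
   counterexamples.  And L, lying in the variety of N5, satisfies
   every quasi-identity of N5 whose premises can be enforced by a substitution
   fixing the valuations that satisfy them, since it becomes an identity.

   Suppose x < z and y form a pentagon in K, with o = y /\ z and i = x \/ y.
   As a \/ - and a /\ - take at most two values on K, each b in K between o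
   and i has a \/ b equal to a \/ o or to a \/ i, and a /\ b equal to a /\ o
   or to a /\ i.  Each combination of these alternatives for z, x and y is
   refuted by a quasi-identity of N5, in the last case combined with (W) and
   the incomparability of a with K.  So K has no pentagon, and then an
   identity of N5 failing in M3 makes K distributive. *)

Section IntervalDoubling.
Variables (d : Order.disp_t) (M : latticeType d) (A B : M).

(* Day's doubling of the interval [A, B]: the points of [A, B] get two copies
   (flags false and true), the other points above A only the copy with flag
   true, and all remaining points only the copy with flag false. *)
Definition doubled (p : M *p bool) : bool :=
  if p.2 then A <= p.1 else ~~ (A <= p.1) || (p.1 <= B).

Definition doubling := {p : M *p bool | doubled p}.
HB.instance Definition _ := [isSub for (@sval _ doubled : doubling -> _)].
HB.instance Definition _ := [Choice of doubling by <:].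
Fact doubling_display : Order.disp_t. Proof. exact: Order.Disp tt tt. Qed.
HB.instance Definition _ :=
  [SubChoice_isSubPOrder of doubling by <: with doubling_display].

Lemma doubled_meet (p q : doubling) :
  doubled ((val p).1 `&` (val q).1, (val p).2 && (val q).2).
Proof.
have low u w : ~~ (A <= w) || (w <= B) -> ~~ (A <= u `&` w) || (u `&` w <= B).
  case/orP=> [nAw|wB]; apply/orP; [left|right]; last exact: leIxr.
  by apply: contra nAw => /le_trans; apply; apply: leIr.
case: p q => [[m e] Pm] [[n f] Pn]; rewrite /doubled /= in Pm Pn *.
case: e Pm; case: f Pn => /= Pn Pm; first by rewrite lexI Pm Pn.
- exact: low.
- by rewrite meetC; apply: low.
- exact: low.
Qed.

Definition doubling_meet (p q : doubling) : doubling := Sub _ (doubled_meet p q).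

(* Unlike meets, joins are not computed in [M *p bool]: the flag must be
   raised when the join lands above A but outside [A, B]. *)
Definition join_flag (p q : doubling) : bool :=
  let m := (val p).1 `|` (val q).1 in [|| (val p).2, (val q).2 | (A <= m) && ~~ (m <= B)].

Lemma doubled_join (p q : doubling) : doubled ((val p).1 `|` (val q).1, join_flag p q).
Proof.
case: p q => [[m e] Pm] [[n f] Pn]; rewrite /doubled /join_flag /= in Pm Pn *.
case: e Pm => Pm /=; first exact: lexUl.
case: f Pn => Pn /=; first exact: lexUr.
by case: (A <= m `|` n); case: (m `|` n <= B).
Qed.

Definition doubling_join (p q : doubling) : doubling := Sub _ (doubled_join p q).

Lemma le_doubling (p q : doubling) :
  (p <= q) = ((val p).1 <= (val q).1) && ((val p).2 ==> (val q).2).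
Proof. by rewrite -Order.le_val leEprod; case: (val p).2; case: (val q).2. Qed.

Lemma doubling_meetP p q r : (p <= doubling_meet q r) = (p <= q) && (p <= r).
Proof.
rewrite !le_doubling /= lexI.
by case: (val p).2 => /=; [apply: andbACA | rewrite !andbT].
Qed.

Lemma doubling_joinP p q r : (doubling_join p q <= r) = (p <= r) && (q <= r).
Proof.
case: p q r => [[m e] Pm] [[n f] Pn] [[k g] Pk].
rewrite !le_doubling /= /join_flag /= [m `|` n <= k]leUx.
case mk: (m <= k); case nk: (n <= k); rewrite ?andbF //=.
case: g Pk => Pk; first by rewrite !implybT.
rewrite /doubled /= in Pm Pn Pk; rewrite !implybF.
case: e Pm; case: f Pn => //= _ _.
apply/negP => /andP[Amn nmnB].
have mnk : m `|` n <= k by rewrite leUx mk nk.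
case/orP: Pk => [nAk|kB].
  by move/negP: nAk; apply; apply: le_trans Amn mnk.
by move/negP: nmnB; apply; apply: le_trans mnk kB.
Qed.

HB.instance Definition _ := Order.POrder_MeetJoin_isLattice.Build
  doubling_display doubling doubling_meetP doubling_joinP.

Lemma doubled_lift (m : M) : doubled (m, (A <= m) && ~~ (m <= B)).
Proof. by rewrite /doubled /=; case: (A <= m); case: (m <= B). Qed.

Definition doubling_lift (m : M) : doubling := Sub _ (doubled_lift m).

Lemma doubled_flag_above m e : doubled (m, e) -> A <= m -> ~~ (m <= B) -> e.
Proof. by case: e; rewrite /doubled /= => // /orP[/negP nAm|->]. Qed.

Lemma doubled_flag_not_above m e : doubled (m, e) -> ~~ (A <= m) -> ~~ e.
Proof. by case: e; rewrite /doubled /= => // ->. Qed.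

Lemma doubling_eval_fst X (v : X -> M) (t : lterm X) :
  (val (lat_eval (doubling_lift \o v) t)).1 = lat_eval v t.
Proof. by elim: t => //= s IHs u IHu; rewrite /lat_eval /= -/lat_eval ?IHs ?IHu. Qed.

Lemma doubling_not_whitman (p1 p2 q1 q2 : doubling) :
  A = (val p1).1 `&` (val p2).1 -> B = (val q1).1 `|` (val q2).1 ->
  ~~ ((val p1).1 <= B) -> ~~ ((val p2).1 <= B) ->
  ~~ (A <= (val q1).1) -> ~~ (A <= (val q2).1) ->
  ~~ (p1 `&` p2 <= q1 `|` q2).
Proof.
case: p1 p2 q1 q2 => [[m1 e1] P1] [[m2 e2] P2] [[n1 f1] Q1] [[n2 f2] Q2] /=.
move=> eA eB nm1 nm2 nn1 nn2.
rewrite le_doubling /= /join_flag /= -eB lexx andbF.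
rewrite (doubled_flag_above P1) ?eA ?leIl // (doubled_flag_above P2) ?eA ?leIr //.
rewrite (negbTE (doubled_flag_not_above Q1 nn1)).
by rewrite (negbTE (doubled_flag_not_above Q2 nn2)) andbF.
Qed.
End IntervalDoubling.

Definition whitman d (L : latticeType d) : Prop :=
  forall p1 p2 q1 q2 : L, p1 `&` p2 <= q1 `|` q2 ->
  [\/ p1 <= q1 `|` q2, p2 <= q1 `|` q2, p1 `&` p2 <= q1 | p1 `&` p2 <= q2].

Lemma lat_eval_prod d1 d2 (M1 : latticeType d1) (M2 : latticeType d2) X
    (v1 : X -> M1) (v2 : X -> M2) (t : lterm X) :
  lat_eval (fun x => (v1 x, v2 x) : M1 *p M2) t = (lat_eval v1 t, lat_eval v2 t).
Proof.
by elim: t => //= s IHs u IHu; rewrite /lat_eval /= in IHs IHu *; rewrite IHs IHu.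
Qed.

Lemma FL_counterexample X (s t : lterm X) : ~ FL_le s t ->
  exists d (M : latticeType d) (v : X -> M), ~~ (lat_eval v s <= lat_eval v t).
Proof.
move=> nst; apply: NNPP => nex; apply: nst => d M v.
by apply: NNPP => nle; apply: nex; exists d, M, v; apply/negP.
Qed.

Lemma FL_le_trans X (r s t : lterm X) : FL_le r s -> FL_le s t -> FL_le r t.
Proof. by move=> rs st d M v; apply: le_trans (rs d M v) (st d M v). Qed.

Lemma FL_whitman X (s t u w : lterm X) : FL_le (LMeet s t) (LJoin u w) ->
  [\/ FL_le s (LJoin u w), FL_le t (LJoin u w),
       FL_le (LMeet s t) u | FL_le (LMeet s t) w].
Proof.
move=> stuw; apply: NNPP => nW.
have [] :
  [/\ ~ FL_le s (LJoin u w), ~ FL_le t (LJoin u w), ~ FL_le (LMeet s t) u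
    & ~ FL_le (LMeet s t) w].
  by split=> h; apply: nW; [apply: Or41 | apply: Or42 | apply: Or43 | apply: Or44].
move=> /FL_counterexample[d1 [M1 [v1 n1]]] /FL_counterexample[d2 [M2 [v2 n2]]].
move=> /FL_counterexample[d3 [M3 [v3 n3]]] /FL_counterexample[d4 [M4 [v4 n4]]].
pose v x := ((((v1 x, v2 x) : M1 *p M2), ((v3 x, v4 x) : M3 *p M4))
  : (M1 *p M2) *p (M3 *p M4)).
have ev r :
    lat_eval v r = ((lat_eval v1 r, lat_eval v2 r), (lat_eval v3 r, lat_eval v4 r)).
  by rewrite /v lat_eval_prod !lat_eval_prod.
pose A := lat_eval v (LMeet s t); pose B := lat_eval v (LJoin u w).
apply/negP: (stuw _ _ (doubling_lift A B \o v)).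
apply: doubling_not_whitman; rewrite !doubling_eval_fst //.
all: rewrite /A /B !ev !leEprod /=.
- by apply: contra n1 => /and3P[/andP[]].
- by apply: contra n2 => /and3P[/andP[]].
- by apply: contra n3 => /and3P[].
- by apply: contra n4 => /and3P[].
Qed.

Lemma whitman_sublattice_of_free d (L : latticeType d) :
  sublattice_of_free L -> whitman L.
Proof.
case=> X [f [fU fI f_inj]].
have leL x y : x <= y <-> FL_le (f x) (f y).
  split=> [/meet_l xy | fxy].
    have [fxy _] := fI x y; rewrite xy in fxy.
    by move=> d' M v; apply: le_trans (fxy d' M v) _; apply: leIr.
  apply/meet_idPl/f_inj; have [fI1 fI2] := fI x y; split=> d' M v.
    by apply: le_trans (fI1 d' M v) _; apply: leIl.
  by apply: le_trans _ (fI2 d' M v); rewrite lexI lexx; apply: fxy.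
move=> p1 p2 q1 q2 /leL pq.
have [fU1 fU2] := fU q1 q2; have [fI1 fI2] := fI p1 p2.
have := FL_whitman (FL_le_trans fI2 (FL_le_trans pq fU1)).
case=> h; [apply: Or41 | apply: Or42 | apply: Or43 | apply: Or44]; apply/leL.
- exact: FL_le_trans h fU2.
- exact: FL_le_trans h fU2.
- exact: FL_le_trans fI1 h.
- exact: FL_le_trans fI1 h.
Qed.


Fixpoint lsubst (X Y : Type) (sigma : X -> lterm Y) (t : lterm X) : lterm Y :=
  match t with
  | LVar x => sigma x
  | LJoin t1 t2 => LJoin (lsubst sigma t1) (lsubst sigma t2)
  | LMeet t1 t2 => LMeet (lsubst sigma t1) (lsubst sigma t2)
  end.

Section TermEvaluation.
Variables (A : Type) (j m : A -> A -> A).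

Lemma eq_leval X (v w : X -> A) : v =1 w -> leval j m v =1 leval j m w.
Proof. by move=> vw; elim=> //= s -> u ->. Qed.

Lemma leval_subst X Y (v : Y -> A) (sigma : X -> lterm Y) (t : lterm X) :
  leval j m v (lsubst sigma t) = leval j m (leval j m v \o sigma) t.
Proof. by elim: t => //= s -> u ->. Qed.
End TermEvaluation.

Inductive pvar := Va | Vx | Vy | Vz.
Scheme Equality for pvar.

Definition val4 (A : Type) (a x y z : A) (u : pvar) : A :=
  match u with Va => a | Vx => x | Vy => y | Vz => z end.

Definition pvar_index (u : pvar) : nat :=
  match u with Va => 0 | Vx => 1 | Vy => 2 | Vz => 3 end.

Definition pvar_of_nat (i : nat) : pvar :=
  match i with 0 => Va | 1 => Vx | 2 => Vy | _ => Vz end.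

Local Notation ta := (LVar Va).
Local Notation tx := (LVar Vx).
Local Notation ty := (LVar Vy).
Local Notation tz := (LVar Vz).
Local Notation "s ⊔ t" := (LJoin s t) (at level 50, left associativity).
Local Notation "s ⊓ t" := (LMeet s t) (at level 40, left associativity).

Inductive premise :=
  | VarLe of pvar & lterm pvar
  | LeVar of lterm pvar & pvar.

Definition premise_subst (p : premise) (u : pvar) : lterm pvar :=
  match p with
  | VarLe w t => if pvar_eq_dec u w then LVar u ⊓ t else LVar u
  | LeVar t w => if pvar_eq_dec u w then LVar u ⊔ t else LVar u
  end.

(* The head premise is enforced first.  [enforce ps] fixes every valuation
   satisfying [ps]; valuations that do not satisfy [ps] need not be mapped to
   ones that do. *)
Definition enforce (ps : seq premise) : pvar -> lterm pvar :=
  foldr (fun p sigma u => lsubst (premise_subst p) (sigma u)) (@LVar pvar) ps.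

Definition N5_elems : seq N5 := [:: N5bot; N5a; N5b; N5c; N5top].

Lemma all_N5 (P : N5 -> bool) : all P N5_elems -> forall p, P p.
Proof. by move=> /and5P[? ? ? ? /andP[? _]]; case. Qed.

Definition N5_eqb (p q : N5) : bool := N5le p q && N5le q p.

Lemma N5_eqbP p q : N5_eqb p q -> p = q.
Proof. by case: p; case: q. Qed.

Definition N5_entails (ps : seq premise) (s t : lterm pvar) : bool :=
  let lhs := lsubst (enforce ps) (s ⊓ t) in
  let rhs := lsubst (enforce ps) s in
  all (fun a => all (fun x => all (fun y => all (fun z =>
    let v := val4 a x y z in
    N5_eqb (leval N5join N5meet v lhs) (leval N5join N5meet v rhs))
  N5_elems) N5_elems) N5_elems) N5_elems.

Lemma N5_entailsP ps s t : N5_entails ps s t -> forall v : pvar -> N5,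
  leval N5join N5meet v (lsubst (enforce ps) (s ⊓ t)) =
  leval N5join N5meet v (lsubst (enforce ps) s).
Proof.
move=> check v; have vE : v =1 val4 (v Va) (v Vx) (v Vy) (v Vz) by case.
rewrite !(eq_leval _ _ vE); apply: N5_eqbP.
exact: (all_N5 (all_N5 (all_N5 (all_N5 check _) _) _) _).
Qed.

Section QuasiIdentities.
Variables (d : Order.disp_t) (L : latticeType d).

Definition holds (v : pvar -> L) (p : premise) : Prop :=
  match p with
  | VarLe u t => v u <= lat_eval v t
  | LeVar t u => lat_eval v t <= v u
  end.

Definition holds_all (v : pvar -> L) (ps : seq premise) : Prop :=
  foldr (fun p P => holds v p /\ P) True ps.

Lemma holds_all_cat v ps qs :
  holds_all v ps -> holds_all v qs -> holds_all v (ps ++ qs).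
Proof. by elim: ps => //= p ps IH [hp hps] hqs; split; last apply: IH. Qed.

Lemma lat_eval_subst X Y (v : Y -> L) (sigma : X -> lterm Y) (t : lterm X) :
  lat_eval v (lsubst sigma t) = lat_eval (lat_eval v \o sigma) t.
Proof. exact: leval_subst. Qed.

Lemma premise_subst_fixed (v : pvar -> L) p u : holds v p ->
  lat_eval v (premise_subst p u) = v u.
Proof.
case: p => [w t|t w] /= h; case: (pvar_eq_dec u w) => [uw|_] //=; subst w.
  exact/meet_idPl.
exact/join_idPl.
Qed.

Lemma enforce_fixed (v : pvar -> L) ps u : holds_all v ps ->
  lat_eval v (enforce ps u) = v u.
Proof.
elim: ps u => //= p ps IH u [hp hps].
rewrite lat_eval_subst -[RHS](IH u hps).
by apply: eq_leval => w; apply: premise_subst_fixed.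
Qed.

Lemma var_N5_entails (v : pvar -> L) ps s t : in_var_N5 L -> N5_entails ps s t ->
  holds_all v ps -> lat_eval v s <= lat_eval v t.
Proof.
move=> hN check hold; apply/meet_idPl.
pose idx (u : pvar) : lterm nat := LVar (pvar_index u).
have fixed u : lat_eval v (lsubst (enforce ps) u) = lat_eval v u.
  by rewrite lat_eval_subst; apply: eq_leval => w; apply: enforce_fixed.
have to_nat u : lat_eval v u = lat_eval (v \o pvar_of_nat) (lsubst idx u).
  by rewrite lat_eval_subst; apply: eq_leval; case.
rewrite -[_ `&` _]/(lat_eval v (s ⊓ t)) -[LHS]fixed -[RHS]fixed.
rewrite [LHS]to_nat [RHS]to_nat; apply: hN => w.
rewrite leval_subst [RHS]leval_subst; exact: N5_entailsP.
Qed.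
End QuasiIdentities.

Section Distributivity.
Variables (d : Order.disp_t) (L : latticeType d).
Hypothesis hN : in_var_N5 L.

Definition pentagon_free (K : L -> Prop) : Prop :=
  forall x y z, K x -> K y -> K z -> x <= z ->
  y `&` x = y `&` z -> y `|` x = y `|` z -> z <= x.

(* This identity of N5 fails in M3 (take x, y, z the three atoms). *)
Lemma var_N5_distributive_law (x y z : L) :
  let dd := (x `&` y) `|` (x `&` z) in let e := x `&` (y `|` z) in
  e <= (e `&` (dd `|` y)) `|` (e `&` (dd `|` z)).
Proof.
pose td := (tx ⊓ ty) ⊔ (tx ⊓ tz); pose te := tx ⊓ (ty ⊔ tz).
apply: (var_N5_entails (v := val4 x x y z) (ps := [::]) (s := te)
  (t := (te ⊓ (td ⊔ ty)) ⊔ (te ⊓ (td ⊔ tz))) hN); first by vm_compute.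
by [].
Qed.

Lemma distributive_of_pentagon_free (K : L -> Prop) :
  (forall x y, K x -> K y -> K (x `|` y)) -> (forall x y, K x -> K y -> K (x `&` y)) ->
  pentagon_free K -> distributive_sub K.
Proof.
move=> KU KI nopent x y z Kx Ky Kz.
have law := var_N5_distributive_law x y z.
set dd := (x `&` y) `|` (x `&` z) in law *; set e := x `&` (y `|` z) in law *.
have de : dd <= e by rewrite leUx !lexI !leIl /= !leIxr ?leUl ?leUr.
have Kd : K dd by apply: KU; apply: KI.
have Ke : K e by apply: KI => //; apply: KU.
have collapse w : K w -> w `&` e <= dd -> e `&` (dd `|` w) <= dd.
  move=> Kw we; have dw : dd <= e `&` (dd `|` w) by rewrite lexI de leUl.
  apply: (nopent dd w) => //; first by apply: KI => //; apply: KU.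
    apply: le_anti; rewrite leI2 //= lexI leIl /=.
    by apply: le_trans we; apply: leI2 => //; apply: leIl.
  by apply: le_anti; rewrite leU2 //= leUx leUl /= joinC leIr.
have ye : y `&` e <= dd.
  apply: le_trans (leUl (x `&` y) (x `&` z)).
  by rewrite lexI (le_trans (leIr e y) (leIl x _)) leIl.
have ze : z `&` e <= dd.
  apply: le_trans (leUr (x `&` z) (x `&` y)).
  by rewrite lexI (le_trans (leIr e z) (leIl x _)) leIl.
by apply: le_anti; rewrite de andbT (le_trans law) // leUx !collapse.
Qed.
End Distributivity.

Local Notation to := (ty ⊓ tz).
Local Notation ti := (tx ⊔ ty).
Local Notation tp := (ta ⊔ to).
Local Notation tq := (ta ⊓ ti).

(* Enforcing the other premises may destroy the pentagon shape, so it is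
   enforced again at the end. *)
Definition around_pentagon (gs : seq premise) : seq premise :=
  let pentagon := [:: LeVar tx Vz; LeVar to Vx; VarLe Vz ti] in
  pentagon ++ gs ++ pentagon.

(* Names record, for b among z, x, y, whether a \/ b is low (below a \/ o) or
   high (above i), and whether a /\ b is low (below o) or high (above a /\ i). *)
Section PentagonCollapse.
Variables (d : Order.disp_t) (L : latticeType d) (a x y z : L).
Hypotheses (hN : in_var_N5 L) (xz : x <= z) (ox : y `&` z <= x) (zi : z <= x `|` y).
Local Notation o := (y `&` z).
Local Notation i := (x `|` y).
Local Notation p := (a `|` o).
Local Notation q := (a `&` i).

Lemma collapse_of_N5_entails gs : N5_entails (around_pentagon gs) tz tx ->
  holds_all (val4 a x y z) gs -> z <= x.
Proof.
move=> check hgs; apply: (var_N5_entails (v := val4 a x y z) hN check).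
by do !apply: holds_all_cat => //; do !split.
Qed.

Lemma collapse_zJlow_xMhigh : a `|` z <= p -> q <= a `&` x -> z <= x.
Proof.
move=> zJ xM; apply: (@collapse_of_N5_entails [:: VarLe Vz tp; LeVar tq Vx]).
  by vm_compute.
have zp : z <= p := le_trans (leUr z a) zJ.
have qx : q <= x := le_trans xM (leIr x a).
by do !split.
Qed.

Lemma collapse_zJlow_xMlow : a `|` z <= p -> a `&` x <= o -> z <= x.
Proof.
move=> zJ xM; apply: (@collapse_of_N5_entails [:: VarLe Vz tp; LeVar (ta ⊓ tx) Vy]).
  by vm_compute.
have zp : z <= p := le_trans (leUr z a) zJ.
have xy : a `&` x <= y := le_trans xM (leIl y z).
by do !split.
Qed.

Lemma collapse_zJhigh_xMhigh : i <= a `|` z -> q <= a `&` x -> z <= x.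
Proof.
move=> zJ xM; apply: (@collapse_of_N5_entails [:: VarLe Vy (ta ⊔ tz); LeVar tq Vx]).
  by vm_compute.
have yz : y <= a `|` z := le_trans (leUr y x) zJ.
have qx : q <= x := le_trans xM (leIr x a).
by do !split.
Qed.

Section ZJoinHighXMeetLow.
Hypotheses (zJ : i <= a `|` z) (xM : a `&` x <= o).

Let yz : y <= a `|` z := le_trans (leUr y x) zJ.
Let xy : a `&` x <= y := le_trans xM (leIl y z).

Lemma collapse_zJhigh_xMlow_yJhigh : i <= a `|` y -> z <= x.
Proof.
move=> yJ; apply: (@collapse_of_N5_entails
  [:: VarLe Vy (ta ⊔ tz); LeVar (ta ⊓ tx) Vy; VarLe Vx (ta ⊔ ty)]).
  by vm_compute.
have xy' : x <= a `|` y := le_trans (leUl x y) yJ.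
by do !split.
Qed.

Lemma collapse_zJhigh_xMlow_yJlow_yMlow : a `|` y <= p -> a `&` y <= o -> z <= x.
Proof.
move=> yJ yM; apply: (@collapse_of_N5_entails
  [:: VarLe Vy (ta ⊔ tz); LeVar (ta ⊓ tx) Vy; VarLe Vy tp; LeVar (ta ⊓ ty) Vz]).
  by vm_compute.
have yp : y <= p := le_trans (leUr y a) yJ.
have yz' : a `&` y <= z := le_trans yM (leIr z y).
by do !split.
Qed.

Section YJoinLowYMeetHigh.
Hypotheses (yJ : a `|` y <= p) (yM : q <= a `&` y).

Let gs : seq premise :=
  [:: VarLe Vy (ta ⊔ tz); LeVar (ta ⊓ tx) Vy; VarLe Vy tp; LeVar tq Vy].

Let hgs : holds_all (val4 a x y z) gs.
Proof.
have yp : y <= p := le_trans (leUr y a) yJ.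
have qy : q <= y := le_trans yM (leIr y a).
by do !split.
Qed.

Lemma zJhigh_xMlow_yJlow_yMhigh_whitman_premise : p `&` (x `|` q) <= q `|` (x `&` p).
Proof.
apply: (var_N5_entails (v := val4 a x y z) (ps := around_pentagon gs)
  (s := tp ⊓ (tx ⊔ tq)) (t := tq ⊔ (tx ⊓ tp)) hN); first by vm_compute.
by do !apply: holds_all_cat => //; do !split.
Qed.

Lemma collapse_zJhigh_xMlow_yJlow_yMhigh_join : x <= q `|` (x `&` p) -> z <= x.
Proof.
move=> hx; apply: (@collapse_of_N5_entails (rcons gs (VarLe Vx (tq ⊔ (tx ⊓ tp))))).
  by vm_compute.
by rewrite -cats1; apply: holds_all_cat => //; do !split.
Qed.

Lemma collapse_zJhigh_xMlow_yJlow_yMhigh_meet : p `&` (x `|` q) <= x -> z <= x.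
Proof.
move=> hx; apply: (@collapse_of_N5_entails (rcons gs (LeVar (tp ⊓ (tx ⊔ tq)) Vx))).
  by vm_compute.
by rewrite -cats1; apply: holds_all_cat => //; do !split.
Qed.
End YJoinLowYMeetHigh.
End ZJoinHighXMeetLow.
End PentagonCollapse.

Section ConvexSublattice.
Variables (d : Order.disp_t) (L : latticeType d) (K : L -> Prop) (a : L).

Definition at_most_two_values (f : L -> L) : Prop :=
  forall b1 b2 b3, K b1 -> K b2 -> K b3 -> [\/ f b1 = f b2, f b1 = f b3 | f b2 = f b3].

Lemma three_values_or_two (f : L -> L) :
  (exists b1 b2 b3,
     [/\ K b1, K b2, K b3 & [/\ f b1 <> f b2, f b1 <> f b3 & f b2 <> f b3]])
  \/ at_most_two_values f.
Proof.
case: (classic (at_most_two_values f)) => [|not2]; [by right | left].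
apply: NNPP => no3; apply: not2 => b1 b2 b3 K1 K2 K3; apply: NNPP => neq.
by apply: no3; exists b1, b2, b3; split=> //; split=> e; apply: neq;
  [apply: Or31 | apply: Or32 | apply: Or33].
Qed.

Hypotheses (hN : in_var_N5 L) (hW : whitman L) (hK : convex_sublattice K).
Hypotheses (hinc : forall b, K b -> incomp a b).
Hypotheses (hJ : at_most_two_values (fun b => a `|` b)).
Hypotheses (hM : at_most_two_values (fun b => a `&` b)).

Lemma join_dichotomy o i b : K o -> K i -> K b -> b <= i ->
  a `|` b <= a `|` o \/ i <= a `|` b.
Proof.
move=> Ko Ki Kb bi; case: (hJ Ko Ki Kb) => /= e; [left | left | right].
- by rewrite e; apply: leU2.
- by rewrite e.
- by rewrite -e leUr.
Qed.

Lemma meet_dichotomy o i b : K o -> K i -> K b -> o <= b ->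
  a `&` i <= a `&` b \/ a `&` b <= o.
Proof.
move=> Ko Ki Kb ob; case: (hM Ko Ki Kb) => /= e; [left | right | left].
- by rewrite -e; apply: leI2.
- by rewrite -e leIr.
- by rewrite e.
Qed.

(* The two alternatives of (W) that do not lead to a quasi-identity would put
   a below, resp. above, an element of K. *)
Lemma collapse_whitman x y z : K (y `&` z) -> K (x `|` y) ->
  x <= z -> y `&` z <= x -> z <= x `|` y ->
  x `|` y <= a `|` z -> a `&` x <= y `&` z ->
  a `|` y <= a `|` (y `&` z) -> a `&` (x `|` y) <= a `&` y -> z <= x.
Proof.
set o := y `&` z; set i := x `|` y; set p := a `|` o; set q := a `&` i.
move=> Ko Ki xz ox zi zJ xM yJ yM; have [_ _ Kconv] := hK.
have inK w : o <= w -> w <= i -> K w by move=> ow wi; apply: Kconv ow wi.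
have xi : x <= i := leUl x y.
have qi : q <= i := leIr i a.
have op : o <= p := leUr o a.
have := zJhigh_xMlow_yJlow_yMhigh_whitman_premise hN xz ox zi zJ xM yJ yM.
case/hW=> [pw|xw|uq|ux].
- have Kw : K (q `|` (x `&` p)).
    apply: inK; first by apply: lexUr; rewrite lexI ox.
    by rewrite leUx qi (le_trans (leIl x p)).
  by case: (hinc Kw) => /(_ (le_trans (leUl a o) pw)).
- apply: (collapse_zJhigh_xMlow_yJlow_yMhigh_join hN xz ox zi zJ xM yJ yM).
  exact: le_trans (leUl x q) xw.
- have Ku : K (p `&` (x `|` q)).
    by apply: inK; [rewrite lexI op lexUl | apply: leIxr; rewrite leUx xi qi].
  by case: (hinc Ku) => _ /(_ (le_trans uq (leIl a i))).
- apply: (collapse_zJhigh_xMlow_yJlow_yMhigh_meet hN xz ox zi zJ xM yJ yM).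
  exact: le_trans ux (leIl x p).
Qed.

Lemma pentagon_free_convex : pentagon_free K.
Proof.
move=> x y z Kx Ky Kz xz yIx yUx; have [KU KI _] := hK.
set o := y `&` z; set i := x `|` y.
have Ko : K o := KI _ _ Ky Kz.
have Ki : K i := KU _ _ Kx Ky.
have ox : o <= x by rewrite /o -yIx leIr.
have zi : z <= i by rewrite /i joinC yUx leUr.
have [zJ|zJ] := join_dichotomy Ko Ki Kz zi;
  have [xM|xM] := meet_dichotomy Ko Ki Kx ox.
- exact: (collapse_zJlow_xMhigh hN xz ox zi zJ xM).
- exact: (collapse_zJlow_xMlow hN xz ox zi zJ xM).
- exact: (collapse_zJhigh_xMhigh hN xz ox zi zJ xM).
have [yJ|yJ] := join_dichotomy Ko Ki Ky (leUr y x); last first.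
  exact: (collapse_zJhigh_xMlow_yJhigh hN xz ox zi zJ xM yJ).
have [yM|yM] := meet_dichotomy Ko Ki Ky (leIl y z); last first.
  exact: (collapse_zJhigh_xMlow_yJlow_yMlow hN xz ox zi zJ xM yJ yM).
exact: (collapse_whitman Ko Ki xz ox zi zJ xM yJ yM).
Qed.
End ConvexSublattice.

Theorem lemma5p1 : forall d (L : latticeType d) (K : L -> Prop) (a : L),
  in_var_N5 L ->
  sublattice_of_free L ->
  convex_sublattice K ->
  (forall b, K b -> incomp a b) ->
  (exists b1 b2 b3, [/\ K b1, K b2, K b3 &
      [/\ a `|` b1 <> a `|` b2, a `|` b1 <> a `|` b3 & a `|` b2 <> a `|` b3]])
  \/ (exists b1 b2 b3, [/\ K b1, K b2, K b3 &
      [/\ a `&` b1 <> a `&` b2, a `&` b1 <> a `&` b3 & a `&` b2 <> a `&` b3]])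
  \/ distributive_sub K.
Proof.
move=> d L K a hN hfree hK hinc.
have [|hJ] := three_values_or_two K (fun b => a `|` b); first by left.
have [|hM] := three_values_or_two K (fun b => a `&` b); first by right; left.
right; right; have [KU KI _] := hK.
apply: distributive_of_pentagon_free => //.
exact: (pentagon_free_convex hN (whitman_sublattice_of_free hfree) hK hinc hJ hM).
Qed.
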